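(* Let $\mathcal P$ be a CSP based on a CSP $\mathcal{BASE}$. Then $\mathcal P$ is arc consistent if and only if $\mathcal P$ is membership rule consistent with respect to $\mathcal{BASE}$.
   Context: A constraint on variables $x_1,\dots,x_n$ with domains $D_1,\dots,D_n$ is a subset $C\subseteq D_1\times\dots\times D_n$; $d[x]$ denotes the component at $x$ of a tuple $d$. A CSP consists of finitely many variables with domains and a finite set of constraints on subsequences of them. For $C\subseteq D_1\times\dots\times D_n$ and a permutation $\pi$ of $[1..n]$, $C^\pi$ is defined by $(a_1,\dots,a_n)\in C^\pi$ iff $(a_{\pi(1)},\dots,a_{\pi(n)})\in C$ (domains permuted accordingly). A constraint $C\subseteq D_1\times\dots\times D_n$ is based on $E\subseteq D'_1\times\dots\times D'_n$ if $D_i\subseteq D'_i$ for all $i$ and $C=E\cap(D_1\times\dots\times D_n)$. A CSP $\mathcal P$ is based on a CSP $\mathcal{BASE}$ if each constraint $C$ of $\mathcal P$ (taken with the domains its variables have in $\mathcal P$) is based on $f(C)^\pi$ for some constraint $f(C)$ of $\mathcal{BASE}$ and some permutation $\pi$ (variables of $C$ and of $f(C)^\pi$ being identified positionally). A membership rule for $C$ is $x_{j_1}\in S_1,\dots,x_{j_m}\in S_m\to y\neq a$ with $x_{j_k},y$ variables of $C$, each $S_k$ a subset of the domain of $x_{j_k}$ in $f(C)^\pi$ and $a$ in the domain of $y$ there; it is valid for a constraint $E$ (on the same positions) if every $d\in E$ with $d[x_{j_k}]\in S_k$ for all $k$ satisfies $d[y]\neq a$. A constraint $C$ of $\mathcal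 P$ is closed under this rule if: whenever the domain of each $x_{j_k}$ in $\mathcal P$ is included in $S_k$, the element $a$ does not belong to the domain of $y$ in $\mathcal P$. $C$ is membership rule consistent (w.r.t. $\mathcal{BASE}$) if it is closed under all membership rules valid for $f(C)^\pi$; $\mathcal P$ is membership rule consistent if all its constraints are. A constraint $C$ of $\mathcal P$ is arc consistent if for every variable $x$ of $C$ and every $a$ in the domain of $x$ in $\mathcal P$ there is $d\in C$ with $d[x]=a$; $\mathcal P$ is arc consistent if all its constraints are. *)

From Stdlib Require Import List.
From mathcomp Require Import all_boot.
Set Implicit Arguments. Unset Strict Implicit. Unset Printing Implicit Defensive.

Section CSPDefs.
Variables (Var : finType) (T : Type).

Record constraint := Constraint {
  arity : nat;
  scope : 'I_arity -> Var;
  rel : ('I_arity -> T) -> Prop }.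
Arguments scope : clear implicits.
Arguments rel : clear implicits.

Record csp := CSP {
  dom : Var -> T -> Prop;
  cons : list constraint }.

(* Well-formedness: each constraint is on a subsequence (distinct variables)
   and is a subset of the product of the domains of its variables. *)
Definition wf_csp (P : csp) : Prop :=
  forall C, In C (cons P) ->
    injective (scope C) /\
    (forall d, rel C d -> forall i, dom P (scope C i) (d i)).

Definition cdom (P : csp) (C : constraint) (i : 'I_(arity C)) : T -> Prop :=
  dom P (scope C i).

(* E^pi, where pi : positions of E -> positions of the new constraint is a
   bijection: (a_1..a_n) in E^pi iff (a_{pi 1},...,a_{pi n}) in E. *)
Definition permrel (E : constraint) (n : nat) (pi : 'I_(arity E) -> 'I_n)
  (a : 'I_n -> T) : Prop := rel E (fun j => a (pi j)).

(* Domains of E^pi (taken in the CSP B), permuted accordingly: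
   the domain of position i is D'_{pi^{-1}(i)}. *)
Definition permdom (B : csp) (E : constraint) (n : nat)
  (pi : 'I_(arity E) -> 'I_n) (i : 'I_n) : T -> Prop :=
  fun v => exists j, pi j = i /\ dom B (scope E j) v.

Definition constraint_based_on (n : nat) (D : 'I_n -> T -> Prop)
  (Crel : ('I_n -> T) -> Prop) (D' : 'I_n -> T -> Prop)
  (Erel : ('I_n -> T) -> Prop) : Prop :=
  (forall i v, D i v -> D' i v) /\
  (forall d, Crel d <-> (Erel d /\ forall i, D i (d i))).

Definition csp_based_on (P B : csp) (f : constraint -> constraint)
  (pi : forall C : constraint, 'I_(arity (f C)) -> 'I_(arity C)) : Prop :=
  forall C, In C (cons P) ->
    In (f C) (cons B) /\ bijective (pi C) /\
    constraint_based_on (@cdom P C) (rel C)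
      (permdom B (pi C)) (permrel (pi C)).

(* Membership rule  x_{j_1} in S_1, ..., x_{j_m} in S_m -> y <> a
   on the positions of an arity-n constraint. *)
Record mrule (n : nat) := MRule {
  prem : list ('I_n * (T -> Prop));
  concl_var : 'I_n;
  concl_val : T }.

Definition is_mrule (n : nat) (D' : 'I_n -> T -> Prop) (r : mrule n) : Prop :=
  (forall p, In p (prem r) -> forall v, p.2 v -> D' p.1 v) /\
  D' (concl_var r) (concl_val r).

Definition mrule_valid (n : nat) (E : ('I_n -> T) -> Prop) (r : mrule n) : Prop :=
  forall d, E d -> (forall p, In p (prem r) -> p.2 (d p.1)) ->
    d (concl_var r) <> concl_val r.

Definition mrule_closed (n : nat) (D : 'I_n -> T -> Prop) (r : mrule n) : Prop :=
  (forall p, In p (prem r) -> forall v, D p.1 v -> p.2 v) ->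
  ~ D (concl_var r) (concl_val r).

Definition mr_consistent_constraint (P B : csp) (C : constraint)
  (E : constraint) (pi : 'I_(arity E) -> 'I_(arity C)) : Prop :=
  forall r : mrule (arity C),
    is_mrule (permdom B pi) r -> mrule_valid (permrel pi) r ->
    mrule_closed (@cdom P C) r.

Definition mr_consistent (P B : csp) (f : constraint -> constraint)
  (pi : forall C : constraint, 'I_(arity (f C)) -> 'I_(arity C)) : Prop :=
  forall C, In C (cons P) -> mr_consistent_constraint P B (pi C).

Definition arc_consistent_constraint (P : csp) (C : constraint) : Prop :=
  forall (i : 'I_(arity C)) a, @cdom P C i a -> exists d, rel C d /\ d i = a.

Definition arc_consistent (P : csp) : Prop :=
  forall C, In C (cons P) -> arc_consistent_constraint P C.

End CSPDefs.
Arguments csp_based_on {Var T} P B f pi.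
Arguments mr_consistent {Var T} P B f pi.

From Stdlib Require Import List Classical.
From mathcomp Require Import all_boot.

(* Arc consistency gives, for every value a of y, a tuple of C with y = a; it
   lies in the base relation and meets the premises of any rule whose sets contain
   the current domains, so a valid rule cannot exclude a.  Conversely, a value a
   of y without support is excluded by the valid rule whose premises are the
   current domains of all variables of C. *)

Lemma In_of_mem (X : eqType) (s : seq X) (x : X) : x \in s -> In x s.
Proof.
elim: s => [|y s IHs] //=.
by rewrite in_cons => /orP [/eqP ->|/IHs]; [left | right].
Qed.

Section MembershipRulesOfOneConstraint.

Variables (T : Type) (n : nat).
Variables (D D' : 'I_n -> T -> Prop) (Crel Erel : ('I_n -> T) -> Prop).
Hypothesis C_based_on_E : constraint_based_on D Crel D' Erel.

Definition supported : Prop :=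
  forall i a, D i a -> exists d, Crel d /\ d i = a.

Definition domain_rule (i : 'I_n) (a : T) : mrule T n :=
  MRule [seq (j, D j) | j <- enum 'I_n] i a.

Lemma domain_rule_premE i a p : In p (prem (domain_rule i a)) -> p.2 = D p.1.
Proof. by case/in_map_iff => j [<- _]. Qed.

Lemma domain_rule_prem_full i a j : In (j, D j) (prem (domain_rule i a)).
Proof. by apply: in_map; apply: In_of_mem; rewrite mem_enum. Qed.

Lemma domain_rule_is_mrule {i a} : D i a -> is_mrule D' (domain_rule i a).
Proof.
have [D_sub _] := C_based_on_E.
move=> Dia; split; last exact: D_sub.
by move=> p /domain_rule_premE -> v; apply: D_sub.
Qed.

Lemma domain_rule_valid {i a} :
  ~ (exists d, Crel d /\ d i = a) -> mrule_valid Erel (domain_rule i a).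
Proof.
have [_ Crel_E] := C_based_on_E.
move=> unsupported d Ed prem_d dia; apply: unsupported; exists d; split=> //.
apply/Crel_E; split=> // j.
exact: prem_d _ (domain_rule_prem_full i a j).
Qed.

Lemma supported_mrule_closed :
  supported -> forall r : mrule T n, mrule_valid Erel r -> mrule_closed D r.
Proof.
have [_ Crel_E] := C_based_on_E.
move=> supp r r_valid D_prem D_concl.
have [d [Cd d_concl]] := supp _ _ D_concl.
have [Ed Dd] := proj1 (Crel_E d) Cd.
by apply: (r_valid d Ed _ d_concl) => p p_prem; apply: D_prem (Dd _).
Qed.

Lemma mrule_closed_supported :
  (forall r : mrule T n, is_mrule D' r -> mrule_valid Erel r -> mrule_closed D r) ->
  supported.
Proof.
move=> closed i a Dia; apply: NNPP => unsupported.
apply: (closed _ (domain_rule_is_mrule Dia) (domain_rule_valid unsupported)) _ Dia.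
by move=> p /domain_rule_premE ->.
Qed.

End MembershipRulesOfOneConstraint.

Theorem mainTheorem7 (Var : finType) (T : Type) (P BASE : csp Var T)
  (f : constraint Var T -> constraint Var T)
  (pi : forall C : constraint Var T, 'I_(arity (f C)) -> 'I_(arity C)) :
  wf_csp P -> wf_csp BASE -> csp_based_on P BASE f pi ->
  (arc_consistent P <-> mr_consistent P BASE f pi).
Proof.
move=> _ _ P_based; split=> [ac | mrc] C CP; have [_ [_ C_based]] := P_based C CP.
- by move=> r _; apply: supported_mrule_closed C_based (ac C CP) r.
- exact: mrule_closed_supported C_based (mrc C CP).
Qed.
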